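(* Let $\mathcal{F}\subseteq\mathcal{P}(\omega)$ be a free filter and let $\mathcal{F}^{(\omega)}$ be the set of all subsets of $\omega\times\omega$ of the form $\bigcup\{\{n\}\times A_n:n<\omega\}$ with $A_n\in\mathcal{F}$ for all $n$. Then (a) $\mathcal{F}$ is non-meager if and only if $\mathcal{F}^{(\omega)}$ is non-meager; and (b) $\mathcal{F}$ is a $P$-filter if and only if $\mathcal{F}^{(\omega)}$ is a $P$-filter.
   Context: A filter on a countable set $S$ is free if it contains all cofinite subsets of $S$. Subsets of $\omega$ (resp. $\omega\times\omega$) are identified with their characteristic functions, so $\mathcal{P}(\omega)$ and $\mathcal{P}(\omega\times\omega)$ carry the Cantor set topology; a filter is non-meager if it is not meager as a subspace of this Cantor set. A filter $\mathcal{G}$ is a $P$-filter if for every countable $\{G_n:n<\omega\}\subseteq\mathcal{G}$ there is $G\in\mathcal{G}$ with $G\setminus G_n$ finite for every $n$. ($\mathcal{F}^{(\omega)}$ is a filter on $\omega\times\omega$.) *)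

From HB Require Import structures.
From mathcomp Require Import all_boot all_order all_algebra.
From mathcomp Require Import all_classical all_reals all_analysis.

Set Implicit Arguments.
Unset Strict Implicit.
Unset Printing Implicit Defensive.

Local Open Scope classical_set_scope.

(* P(omega), identified with characteristic functions: the Cantor space 2^omega *)
Definition Pomega : Type := cantor_space.
(* P(omega x omega), identified with characteristic functions: 2^(omega x omega)
   with the product topology of discrete bool *)
Definition Pomega2 : Type := prod_topology (fun _ : nat * nat => bool).
HB.instance Definition _ := Pointed.on Pomega2.
HB.instance Definition _ := Nbhs.on Pomega2.
HB.instance Definition _ := Topological.on Pomega2.

Definition nowhere_dense (X : topologicalType) (A : set X) : Prop :=
  interior (closure A) = set0.

Definition meager (X : topologicalType) (A : set X) : Prop :=
  exists N : nat -> set X,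
    (forall n, nowhere_dense (N n)) /\ A `<=` \bigcup_n N n.

(* a family of subsets of T (a filter, given as a set_system) seen as a
   subset of the Cantor space 2^T via characteristic functions *)
Definition char_set {T : Type} (F : set_system T) : set (T -> bool) :=
  [set f | F [set x | f x]].

Definition free_filter {T : Type} (F : set_system T) : Prop :=
  ProperFilter F /\ forall A : set T, finite_set (~` A) -> F A.

Definition P_filter {T : Type} (G : set_system T) : Prop :=
  forall Gs : nat -> set T, (forall n, G (Gs n)) ->
    exists H, G H /\ forall n, finite_set (H `\` Gs n).

Definition Fomega (F : set_system nat) : set_system (nat * nat) :=
  [set B | exists A : nat -> set nat, (forall n, F (A n)) /\
           B = \bigcup_n ([set n] `*` A n)].

From HB Require Import structures.
From mathcomp Require Import all_boot all_order all_algebra.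
From mathcomp Require Import all_classical all_reals all_analysis.

Set Implicit Arguments.
Unset Strict Implicit.
Unset Printing Implicit Defensive.

Local Open Scope classical_set_scope.

(* Part (b): given G_k in F^(omega), pick in each row r a pseudo-intersection
   P_r in F of the sections (G_k)_r; the set with rows P_r cap the (G_k)_r for
   k <= r is in F^(omega) and exceeds G_k only on the rows r < k, each time by a
   finite set.  Conversely, a pseudo-intersection of the sets omega x A_k in
   F^(omega) has a row that is one for the A_k.

   Part (a): restriction to row 0 pulls a meager cover of F back to one of
   F^(omega).  Conversely, let F^(omega) be covered by nowhere dense N_i.  Since
   what is needed to avoid a nowhere dense set, after fixing f on [0,n)^2,
   depends on f only through [0,n)^2, there are n_0 < n_1 < ... such that any f
   can be changed inside the shell [0,n_(k+1))^2 minus [0,n_k)^2 so that a whole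
   neighbourhood misses N_0, ..., N_k.  If A in F missed infinitely many
   intervals [n_k, n_(k+1)), making these changes on the corresponding shells
   of {(r,c) | r <= c in A}, which is empty there, would give a member of
   F^(omega) outside every N_i.  Hence F is covered by the nowhere dense sets of
   those A that meet every interval beyond some j. *)

Lemma nowhere_denseU (T : topologicalType) (A B : set T) :
  nowhere_dense A -> nowhere_dense B -> nowhere_dense (A `|` B).
Proof.
rewrite /nowhere_dense closureU => intA0 intB0.
set W := (closure A `|` closure B)°.
have clA : closure A = closure (closure A) by apply/closure_id/closed_closure.
have WA : W `<=` closure A.
  move=> x Wx; apply: contrapT => nAx.
  have : ((closure A `|` closure B) `&` ~` closure A)° x.
    by rewrite interiorI interiorC -clA.
  by move/(interiorS (B := closure B)); rewrite intB0; apply=> y [[]].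
rewrite -subset0 -intA0 => x Wx; apply: (interiorS WA).
by rewrite /W (interior_id _).1 //; exact: open_interior.
Qed.

Lemma nowhere_dense_bigcup_ord (T : topologicalType) (N : nat -> set T) n :
  (forall i, nowhere_dense (N i)) -> nowhere_dense (\bigcup_(i < n) N i).
Proof.
move=> ndN; rewrite bigcup_mkord; elim: n => [|n IH].
  by rewrite big_ord0 /nowhere_dense closure0 interior0.
by rewrite big_ord_recr; apply: nowhere_denseU.
Qed.

Section Cylinders.
Variable I : eqType.

Local Notation space := (prod_topology (fun _ : I => bool)).

Definition cylinder (S : seq I) (f : I -> bool) : set (I -> bool) :=
  [set g : I -> bool | {in S, g =1 f}].

Lemma cylinder_nbhs (f : space) S : nbhs f (cylinder S f).
Proof.
elim: S => [|x S IH].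
  by apply: filterS (filterT : nbhs f setT) => g _ x.
have fx : nbhs f (proj x @^-1` [set f x]) by exact: proj_continuous.
apply: (filterS _ (filterI fx IH)) => g [/= gx gS] y.
by rewrite inE => /predU1P [->|/gS].
Qed.

Lemma nbhs_cylinder (f : space) U :
  nbhs f U -> exists S, cylinder S f `<=` U.
Proof.
pose Z : set_system (I -> bool) := [set U | exists S, cylinder S f `<=` U].
have ZF : Filter Z.
  split=> [|P Q [S1 PS1] [S2 QS2]|P Q PQ [S PS]]; first by exists [::].
    exists (S1 ++ S2) => g gS; split.
      by apply: PS1 => x xS; apply: gS; rewrite mem_cat xS.
    by apply: QS2 => x xS; apply: gS; rewrite mem_cat xS orbT.
  by exists S => g /PS /PQ.
have : Z --> (f : space).
  apply/cvg_sup => i A [_ [[W _ <-]]] /= Wf /filterS; apply.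
  by exists [:: i] => g gi /=; rewrite gi ?mem_head.
by move/(_ U).
Qed.

Lemma nowhere_dense_cylinderP (N : set space) :
  nowhere_dense N <->
  forall f S, exists g S', cylinder S f g /\ cylinder S' g `<=` ~` N.
Proof.
split=> [ndN f S | ndN].
  apply: contrapT => noS'; suff : (closure N)° f by rewrite ndN.
  apply: filterS (cylinder_nbhs f S) => g gS B /nbhs_cylinder [S' S'B].
  apply: contrapT => BN; apply: noS'; exists g, S'; split=> // h hS' Nh.
  by apply: BN; exists h; split=> //; exact: S'B.
rewrite /nowhere_dense -subset0 => f /nbhs_cylinder [S Sint].
have [g [S' [gS S'N]]] := ndN f S.
have [h [Nh hS']] := Sint g gS _ (cylinder_nbhs g S').
exact: S'N hS' Nh.
Qed.

End Cylinders.

Lemma nowhere_dense_comp (I J : eqType) (i : I -> J) (r : J -> I)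
    (N : set (prod_topology (fun _ : I => bool))) :
  cancel i r -> nowhere_dense N ->
  nowhere_dense ([set f : J -> bool | N (f \o i)]
                   : set (prod_topology (fun _ : J => bool))).
Proof.
move=> iK /nowhere_dense_cylinderP ndN; apply/nowhere_dense_cylinderP => f S.
have [g [S' [gS S'N]]] := ndN (f \o i) (map r S).
exists (fun y => if i (r y) == y then g (r y) else f y), (map i S'); split.
  by move=> y yS /=; case: eqP => // iry; rewrite gS ?map_f //= iry.
move=> h hS' /=; apply: S'N => x xS' /=.
by rewrite hS' ?map_f //= iK eqxx.
Qed.

Lemma uniform_bound_of_local (T : eqType) (L : seq T)
    (P : (T -> bool) -> nat -> Prop) :
  (forall f f' m, {in L, f =1 f'} -> P f m -> P f' m) ->
  (forall f m m', m <= m' -> P f m -> P f m') ->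
  (forall f, exists m, P f m) -> exists m, forall f, P f m.
Proof.
elim: L P => [|a L IH] P Ploc Pmono Pex.
  have [m Pm] := Pex (fun _ => false).
  by exists m => f; apply: Ploc Pm.
pose upd (f : T -> bool) b x := if x == a then b else f x.
have [m Pm] : exists m, forall f, P (upd f true) m /\ P (upd f false) m.
  apply: IH => [f f' m ff' [Pt Pf] | f m m' mm' [Pt Pf] | f].
  - by split; [apply: Ploc Pt | apply: Ploc Pf] => x;
      rewrite inE /upd; case: eqP => //= _ /ff'.
  - by split; apply: Pmono mm' _.
  - have [[mt Pt] [mf Pf]] := (Pex (upd f true), Pex (upd f false)).
    exists (maxn mt mf); split; first by apply: Pmono Pt; rewrite leq_maxl.
    by apply: Pmono Pf; rewrite leq_maxr.
have updE f : f = upd f (f a).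
  by apply/funext => x; rewrite /upd; case: eqP => // ->.
by exists m => f; rewrite (updE f); case: (f a); case: (Pm f).
Qed.

Lemma leq_incr (n : nat -> nat) :
  (forall k, n k < n k.+1) -> forall k, k <= n k.
Proof. by move=> n_incr; elim=> // k IH; exact: leq_ltn_trans IH (n_incr k). Qed.

Section Exhaustion.
Variables (I : eqType) (K : nat -> seq I).
Hypothesis K_mono : forall n m, n <= m -> {subset K n <= K m}.
Hypothesis K_cover : forall x, exists n, x \in K n.

Local Notation space := (prod_topology (fun _ : I => bool)).

Lemma exhaustion_seq (S : seq I) : exists n, {subset S <= K n}.
Proof.
elim: S => [|x S [n Sn]]; first by exists 0.
have [m xm] := K_cover x.
exists (maxn n m) => y; rewrite inE => /predU1P [->|/Sn].
  exact: K_mono (leq_maxr n m) _ xm.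
exact: K_mono (leq_maxl n m) y.
Qed.

Lemma nowhere_denseP (N : set space) :
  nowhere_dense N <->
  forall f n, exists g m, cylinder (K n) f g /\ cylinder (K m) g `<=` ~` N.
Proof.
rewrite nowhere_dense_cylinderP; split=> ndN f.
  move=> n; have [g [S [fg gN]]] := ndN f (K n).
  have [m Sm] := exhaustion_seq S.
  by exists g, m; split=> // h hg; apply: gN => x /Sm /hg.
move=> S; have [n Sn] := exhaustion_seq S.
have [g [m [fg gN]]] := ndN f n.
by exists g, (K m); split=> // x /Sn /fg.
Qed.

Lemma nowhere_dense_uniform (D : set space) n : nowhere_dense D ->
  exists m, n < m /\ forall f,
    exists g, cylinder (K n) f g /\ cylinder (K m) g `<=` ~` D.
Proof.
move=> /nowhere_denseP ndD.
pose P f m := exists g, cylinder (K n) f g /\ cylinder (K m) g `<=` ~` D.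
have Pmono f m m' : m <= m' -> P f m -> P f m'.
  move=> mm' [g [fg gD]]; exists g; split=> // h hg.
  by apply: gD => x /(K_mono mm') /hg.
have [m Pm] : exists m, forall f, P f m.
  apply: (uniform_bound_of_local (L := K n)) => // [f f' m ff' [g [fg gD]] | f].
    by exists g; split=> // x xK; rewrite fg // ff'.
  by have [g [m fgD]] := ndD f n; exists m, g.
exists (maxn m n.+1); split=> [|f]; first by rewrite leq_maxr.
by apply: Pmono (Pm f); rewrite leq_maxl.
Qed.

Lemma shell_sequence (D : nat -> set space) : (forall k, nowhere_dense (D k)) ->
  exists (n : nat -> nat) (g : nat -> (I -> bool) -> I -> bool),
    [/\ forall k, n k < n k.+1,
        forall k f, cylinder (K (n k)) f (g k f) &
        forall k f, cylinder (K (n k.+1)) (g k f) `<=` ~` D k].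
Proof.
move=> ndD.
have /choice [next nextP] : forall km : nat * nat, exists m, km.2 < m /\
    forall f, exists g, cylinder (K km.2) f g /\ cylinder (K m) g `<=` ~` D km.1.
  by case=> k m; exact: nowhere_dense_uniform.
pose fix n k := if k is k'.+1 then next (k', n k') else 0.
have /choice [g gP] : forall kf : nat * (I -> bool), exists g,
    cylinder (K (n kf.1)) kf.2 g /\ cylinder (K (n kf.1.+1)) g `<=` ~` D kf.1.
  by case=> k f; exact: (nextP (k, n k)).2.
exists n, (fun k f => g (k, f)); split=> [k | k f | k f].
- exact: (nextP (k, n k)).1.
- exact: (gP (k, f)).1.
- exact: (gP (k, f)).2.
Qed.

Section Fusion.
Variables (n : nat -> nat) (D : nat -> set space).
Variable g : nat -> (I -> bool) -> I -> bool.
Hypothesis n_incr : forall k, n k < n k.+1.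
Hypothesis g_agree : forall k f, cylinder (K (n k)) f (g k f).
Hypothesis g_avoid : forall k f, cylinder (K (n k.+1)) (g k f) `<=` ~` D k.

Lemma shell_cover x : exists k, x \in K (n k).
Proof.
by have [k xk] := K_cover x; exists k; exact: K_mono (leq_incr n_incr k) _ xk.
Qed.

Lemma cylinder_limit (b : nat -> I -> bool) :
  (forall k, cylinder (K (n k)) (b k) (b k.+1)) ->
  exists B, forall k, cylinder (K (n k)) (b k) B.
Proof.
move=> b_step.
have n_mono : {homo n : j k / j <= k}.
  by apply: homo_leq leqnn leq_trans _ => k; exact: ltnW.
have b_stable j k : j <= k -> cylinder (K (n j)) (b j) (b k).
  elim: k => [|k IH]; first by rewrite leqn0 => /eqP ->.
  rewrite leq_eqVlt => /predU1P [-> //|]; rewrite ltnS => jk x xj.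
  have xk : x \in K (n k) by exact: K_mono (n_mono _ _ jk) _ xj.
  by rewrite b_step // IH.
have /choice [s sP] := shell_cover.
exists (fun x => b (s x) x) => k x xk /=.
have [sk|ks] := leqP (s x) k; first by rewrite (b_stable _ _ sk).
by rewrite (b_stable _ _ (ltnW ks)).
Qed.

Lemma fusion_avoid (b0 : I -> bool) (miss : set nat) :
  (forall j, exists2 k, j <= k & miss k) ->
  (forall k x, miss k -> x \in K (n k.+1) -> x \notin K (n k) -> ~~ b0 x) ->
  exists2 B : I -> bool, (forall x, b0 x -> B x) &
    forall j, exists2 k, j <= k & ~ D k B.
Proof.
move=> miss_inf b0_shell.
pose patch k f x :=
  if `[< miss k >] && (x \in K (n k.+1)) then g k f x else f x.
pose fix b k := if k is k'.+1 then patch k' (b k') else b0.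
have b_step k : cylinder (K (n k)) (b k) (b k.+1).
  by move=> x xk /=; rewrite /patch; case: ifP => // _; exact: g_agree.
have b0_b k x : b0 x -> b k x.
  move=> b0x; elim: k => //= k IH; rewrite /patch.
  case: ifP => // /andP [/asboolP mk xk1].
  have [xk|xk] := boolP (x \in K (n k)); first by rewrite g_agree.
  by move: (b0_shell k x mk xk1 xk); rewrite b0x.
have [B bB] := cylinder_limit b_step.
exists B => [x b0x | j].
  by have [k xk] := shell_cover x; rewrite (bB k x xk) b0_b.
have [k jk mk] := miss_inf j; exists k => //.
apply: (g_avoid (k := k) (f := b k) (t := B)) => x xk1.
by rewrite (bB k.+1 x xk1) /= /patch xk1 andbT; case: asboolP.
Qed.

End Fusion.

End Exhaustion.

Lemma iota0_mono n m : n <= m -> {subset iota 0 n <= iota 0 m}.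
Proof. by move=> nm x; rewrite !mem_iota /= => /leq_trans; apply. Qed.

Lemma iota0_cover x : exists n, x \in iota 0 n.
Proof. by exists x.+1; rewrite mem_iota add0n ltnSn. Qed.

Definition square n : seq (nat * nat) :=
  [seq (i, j) | i <- iota 0 n, j <- iota 0 n].

Lemma mem_square n x : (x \in square n) = (x.1 < n) && (x.2 < n).
Proof.
case: x => i j; apply/allpairsP/andP => [[[i' j'] /= [] ] | [] ].
  by rewrite !mem_iota => ? ? [-> ->].
by move=> ? ?; exists (i, j); rewrite !mem_iota.
Qed.

Lemma square_mono n m : n <= m -> {subset square n <= square m}.
Proof.
move=> nm x; rewrite !mem_square => /andP [x1 x2].
by rewrite (leq_trans x1 nm) (leq_trans x2 nm).
Qed.

Lemma square_cover x : exists n, x \in square n.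
Proof.
exists (maxn x.1 x.2).+1.
by rewrite mem_square !ltnS leq_maxl leq_maxr.
Qed.

Definition meets_intervals (n : nat -> nat) j : set (nat -> bool) :=
  [set f | forall k, j <= k -> exists2 x, n k <= x < n k.+1 & f x].

Lemma nowhere_dense_meets_intervals (n : nat -> nat) j :
  (forall k, n k < n k.+1) -> nowhere_dense (meets_intervals n j : set Pomega).
Proof.
move=> n_incr; apply/(nowhere_denseP iota0_mono iota0_cover) => f m.
exists (fun x => (x < m) && f x), (n (maxn j m).+1); split.
  by move=> x; rewrite mem_iota /= => ->.
move=> h hg /(_ (maxn j m) (leq_maxl _ _)) [x /andP [nx xn]].
rewrite hg ?mem_iota //= ltnNge.
suff -> : m <= x by [].
exact: leq_trans (leq_maxr j m) (leq_trans (leq_incr n_incr _) nx).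
Qed.

Lemma FomegaP (F : set_system nat) (B : set (nat * nat)) :
  Fomega F B <-> forall r, F [set c | B (r, c)].
Proof.
split=> [[A [FA ->]] r | FB].
  suff -> : [set c | (\bigcup_m ([set m] `*` A m)) (r, c)] = A r by [].
  by apply/seteqP; split=> c /=; [case=> m _ [/= -> ] | exists r].
exists (fun r => [set c | B (r, c)]); split=> //.
by apply/seteqP; split=> [[r c] Brc | [r c] [m _ [/= -> ]]] //; exists r.
Qed.

Lemma filter_forall_le (T : Type) (F : set_system T) (A : nat -> set T) m :
  Filter F -> (forall k, F (A k)) -> F [set x | forall k, k <= m -> A k x].
Proof.
move=> FF FA; elim: m => [|m IH].
  by apply: filterS (FA 0) => x A0x k; rewrite leqn0 => /eqP ->.
apply: filterS (filterI IH (FA m.+1)) => x [Ax Am1x] k.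
by rewrite leq_eqVlt => /predU1P [-> | /Ax].
Qed.

Lemma P_filter_Fomega (F : set_system nat) :
  Filter F -> P_filter F -> P_filter (Fomega F).
Proof.
move=> FF PF G FG.
have FGr k r : F [set c | G k (r, c)] by exact: (FomegaP F (G k)).1 (FG k) r.
have /choice [P PP] : forall r, exists P,
    F P /\ forall k, finite_set (P `\` [set c | G k (r, c)]).
  by move=> r; exact: PF (FGr^~ r).
pose H := [set x : nat * nat | P x.1 x.2 /\ forall k, k <= x.1 -> G k x].
exists H; split.
  apply/FomegaP => r.
  exact: filterI (PP r).1 (filter_forall_le r FF (FGr^~ r)).
move=> k; apply: (sub_finite_set
  (B := \bigcup_(r in `I_k) ([set r] `*` (P r `\` [set c | G k (r, c)])))).
  move=> [r c] [[Prc Hrc] nGk]; exists r => /=.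
    by rewrite ltnNge; apply/negP => kr; apply: nGk; exact: Hrc.
  by split.
apply: bigcup_finite; first exact: finite_II.
by move=> r _; apply: finite_setX; [exact: finite_set1 | exact: (PP r).2].
Qed.

Lemma P_filter_of_Fomega (F : set_system nat) : P_filter (Fomega F) -> P_filter F.
Proof.
move=> PF A FA.
have FGA k : Fomega F [set x | A k x.2] by apply/FomegaP => r; exact: FA.
have [H [FH Hfin]] := PF _ FGA.
exists [set c | H (0, c)]; split; first exact: (FomegaP F H).1 FH 0.
move=> k; apply: (sub_finite_set (B := snd @` (H `\` [set x | A k x.2]))).
  by move=> c [H0c nAc]; exists (0, c).
exact: finite_image.
Qed.

Lemma meager_Fomega (F : set_system nat) :
  meager (char_set F : set Pomega) -> meager (char_set (Fomega F) : set Pomega2).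
Proof.
move=> [N [ndN FN]].
exists (fun i => [set f : nat * nat -> bool | N i (f \o pair 0)]); split.
  by move=> i; exact: (nowhere_dense_comp (r := snd)).
by move=> f /(FomegaP F) /(_ 0) /FN [i _ Ni]; exists i.
Qed.

Lemma meager_of_Fomega (F : set_system nat) :
  Filter F -> (forall A, finite_set (~` A) -> F A) ->
  meager (char_set (Fomega F) : set Pomega2) -> meager (char_set F : set Pomega).
Proof.
move=> FF Fcof [N [ndN FN]].
have ndD k : nowhere_dense (\bigcup_(i < k.+1) N i).
  exact: nowhere_dense_bigcup_ord.
have [n [g [n_incr g_agree g_avoid]]] :=
  shell_sequence square_mono square_cover ndD.
exists (meets_intervals n); split=> [j | f Ff].
  exact: nowhere_dense_meets_intervals.
apply: contrapT => nomeet.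
pose miss := [set k | forall x, n k <= x < n k.+1 -> ~~ f x].
have miss_inf j : exists2 k, j <= k & miss k.
  apply: contrapT => nomiss; apply: nomeet; exists j => // k jk.
  apply: contrapT => nohit; apply: nomiss; exists k => // x xk.
  by apply/negP => fx; apply: nohit; exists x.
pose b0 x := (x.1 <= x.2) && f x.2.
have b0_shell k x :
    miss k -> x \in square (n k.+1) -> x \notin square (n k) -> ~~ b0 x.
  case: x => r c mk; rewrite !mem_square /= => /andP [_ cn] out.
  apply/andP => [[rc fc]].
  have : n k <= c < n k.+1.
    rewrite cn andbT leqNgt; apply: contra out => cnk.
    by rewrite cnk (leq_ltn_trans rc cnk).
  by move/mk; rewrite fc.
have [B b0B avoidB] :=
  fusion_avoid square_mono square_cover n_incr g_agree g_avoid miss_inf b0_shell.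
have FB : char_set (Fomega F) B.
  apply/FomegaP => r; apply: filterS (filterI Ff (Fcof [set c | r <= c] _)).
    by move=> c [fc rc]; apply: b0B; rewrite /b0 /= rc fc.
  by apply: sub_finite_set (finite_II r) => c /= /negP; rewrite -ltnNge.
have [i _ NiB] := FN B FB.
have [k ik DkB] := avoidB i.
by apply: DkB; exists i.
Qed.

Theorem mainTheorem5 (F : set_system nat) :
  free_filter F ->
  ((~ meager (char_set F : set Pomega)) <->
     (~ meager (char_set (Fomega F) : set Pomega2))) /\
  (P_filter F <-> P_filter (Fomega F)).
Proof.
move=> [PF Fcof]; split; split.
- by move=> nmF /(meager_of_Fomega PF Fcof).
- by move=> nmFo /meager_Fomega.
- exact: P_filter_Fomega.
- exact: P_filter_of_Fomega.
Qed.
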